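(* Let $p$ be a prime, $G=\mathbb{Z}_p$, and let $f,g$ be flows on $n$. Suppose there is a set of indices $I\subseteq[n]$ with $|I|=p-1$ such that $f(i)\neq g(i)$ for every $i\in I$. Then for any subset $I'\subseteq[n]$ disjoint from $I$ there exists a subset $I''\subseteq I$ such that $f$ and $g$ can be exchanged on $I'\cup I''$, i.e. $\sum_{i\in I'\cup I''}f(i)=\sum_{i\in I'\cup I''}g(i)$ in $\mathbb{Z}_p$.
   Context: For a finite abelian group $G$ and $n\in\mathbb{N}$, a flow on $n$ is a function $f:[n]\to G$, $[n]=\{1,\dots,n\}$, with $\sum_{i=1}^n f(i)=0$. Exchanging two flows $f,g$ on a set of indices $J$ means replacing them by $f',g'$ with $f'(i)=f(i)$, $g'(i)=g(i)$ for $i\notin J$ and $f'(i)=g(i)$, $g'(i)=f(i)$ for $i\in J$; this yields flows exactly when $\sum_{i\in J}f(i)=\sum_{i\in J}g(i)$. $\mathbb{Z}_p$ is the cyclic group of order $p$. *)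

From mathcomp Require Import all_boot all_order all_algebra.
Set Implicit Arguments. Unset Strict Implicit. Unset Printing Implicit Defensive.
Import GRing.Theory.
Local Open Scope ring_scope.

(* A flow on [n] with values in a (finite abelian) group G: f : [n] -> G
   with sum zero. Indices [n] = {1..n} are represented by 'I_n. *)
Definition is_flow (G : zmodType) (n : nat) (f : 'I_n -> G) : Prop :=
  \sum_(i < n) f i = 0.

(* f and g can be exchanged on J (the exchanged functions are again flows)
   iff the sums over J agree. *)
Definition exchangeable (G : zmodType) (n : nat) (f g : 'I_n -> G)
  (J : {set 'I_n}) : Prop :=
  \sum_(i in J) f i = \sum_(i in J) g i.

(* Put d := f - g, nonzero on I.  Adding an index x with d x != 0 to a set J
   enlarges the set of subset sums of d over J, unless that set is closed under
   translation by d x, in which case it is all of Z_p.  Hence the p - 1 indices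
   of I have all of Z_p as subset sums; in particular some I'' <= I has
   d-sum equal to minus the d-sum over I'. *)

From mathcomp Require Import all_boot all_order all_algebra zify.
Set Implicit Arguments.
Unset Strict Implicit.
Unset Printing Implicit Defensive.

Import GRing.Theory.
Local Open Scope ring_scope.

Lemma Fp_translate_closed_setT (p : nat) (S : {set 'F_p}) (s0 d : 'F_p) :
  prime p -> d != 0 -> s0 \in S -> (forall s, s \in S -> s + d \in S) ->
  S = setT.
Proof.
move=> pr_p dn0 s0S clS; apply/setP=> y; rewrite inE.
have muln_in m : s0 + d *+ m \in S.
  by elim: m => [|m IHm]; rewrite ?mulr0n ?addr0 // mulrSr addrA clS.
have := muln_in (nat_of_ord ((y - s0) / d)).
by rewrite -mulr_natr natr_Zp mulrCA divff // mulr1 addrC subrK.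
Qed.

Section SubsetSums.

Variables (G : finZmodType) (n : nat) (d : 'I_n -> G).

Definition subset_sums (J : {set 'I_n}) : {set G} :=
  [set \sum_(i in K) d i | K : {set 'I_n} in powerset J].

Lemma subset_sumsP (J : {set 'I_n}) s :
  reflect (exists2 K : {set 'I_n}, K \subset J & s = \sum_(i in K) d i)
          (s \in subset_sums J).
Proof.
by apply: (iffP imsetP) => -[K KJ ->]; exists K; rewrite // ?powersetE in KJ *.
Qed.

Lemma subset_sums0 (J : {set 'I_n}) : 0 \in subset_sums J.
Proof. by apply/subset_sumsP; exists set0; rewrite ?sub0set ?big_set0. Qed.

Lemma subset_sumsS (J1 J2 : {set 'I_n}) :
  J1 \subset J2 -> subset_sums J1 \subset subset_sums J2.
Proof.
move=> sJ12; apply/subsetP=> s /subset_sumsP[K KJ1 ->].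
by apply/subset_sumsP; exists K => //; apply: subset_trans sJ12.
Qed.

Lemma subset_sumsU1 (J : {set 'I_n}) x s :
  x \notin J -> s \in subset_sums J -> s + d x \in subset_sums (x |: J).
Proof.
move=> xJ /subset_sumsP[K KJ ->]; apply/subset_sumsP; exists (x |: K).
  by rewrite setUS.
have xK : x \notin K by apply: contra xJ; apply: subsetP.
by rewrite big_setU1 //= addrC.
Qed.

End SubsetSums.

Lemma card_subset_sums (p n : nat) (d : 'I_n -> 'F_p) (J : {set 'I_n}) :
  prime p -> {in J, forall i, d i != 0} ->
  (minn p #|J|.+1 <= #|subset_sums d J|)%N.
Proof.
move=> pr_p; move: {2}#|J| (erefl #|J|) => k; elim: k J => [|k IHk] J cJ dJ.
  rewrite cJ; apply: leq_trans (geq_minr _ _) _.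
  by rewrite card_gt0; apply/set0Pn; exists 0; apply: subset_sums0.
have /set0Pn[x xJ] : J != set0 by rewrite -card_gt0 cJ.
have cJx : #|J :\ x| = k by move: (cardsD1 x J); rewrite xJ cJ => -[].
have dJx : {in J :\ x, forall i, d i != 0}.
  by move=> i /setD1P[_ /dJ].
have {}IHk := IHk _ cJx dJx.
have xJx : x \notin J :\ x by rewrite !inE eqxx.
have defJ : x |: (J :\ x) = J by rewrite setD1K.
have [closed | /forallPn[s]] :=
  boolP [forall s, (s \in subset_sums d (J :\ x)) ==>
                   (s + d x \in subset_sums d (J :\ x))].
  have full : subset_sums d (J :\ x) = setT.
    apply: (Fp_translate_closed_setT pr_p (dJ x xJ) (subset_sums0 _ _)) => s.
    by move/forallP: closed => /(_ s) /implyP.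
  have -> : subset_sums d J = setT.
    by apply/eqP; rewrite eqEsubset subsetT -full subset_sumsS ?subD1set.
  by rewrite cardsT card_Fp // geq_minl.
rewrite negb_imply => /andP[sJx nsJx].
have lt_sums : (#|subset_sums d (J :\ x)| < #|subset_sums d J|)%N.
  apply: proper_card; rewrite properE subset_sumsS ?subD1set //=.
  by apply/subsetPn; exists (s + d x); rewrite // -defJ subset_sumsU1.
have := leq_ltn_trans IHk lt_sums; rewrite cJ; lia.
Qed.

Lemma subset_sums_setT (p n : nat) (d : 'I_n -> 'F_p) (I : {set 'I_n}) :
  prime p -> #|I| = p.-1 -> {in I, forall i, d i != 0} ->
  subset_sums d I = setT.
Proof.
move=> pr_p cI dI; apply/eqP; rewrite eqEcard subsetT cardsT card_Fp //.
by have := card_subset_sums pr_p dI; rewrite cI prednK ?prime_gt0 // minnn.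
Qed.

Lemma exchangeableE (G : zmodType) (n : nat) (f g : 'I_n -> G) J :
  exchangeable f g J <-> \sum_(i in J) (f i - g i) = 0.
Proof. by rewrite /exchangeable sumrB; split=> [->|/subr0_eq]; rewrite ?subrr. Qed.

Theorem lemma3p1 (p n : nat) (pr_p : prime p) (f g : 'I_n -> 'F_p)
  (hf : is_flow f) (hg : is_flow g)
  (I : {set 'I_n}) (hI : #|I| = p.-1) (hfg : forall i, i \in I -> f i <> g i)
  (I' : {set 'I_n}) (hdis : [disjoint I & I']) :
  exists2 I'' : {set 'I_n}, I'' \subset I & exchangeable f g (I' :|: I'').
Proof.
have dI : {in I, forall i, f i - g i != 0}.
  by move=> i /hfg; rewrite subr_eq0 => /eqP.
have : - \sum_(i in I') (f i - g i) \in subset_sums (fun i => f i - g i) I.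
  by rewrite subset_sums_setT ?inE.
case/subset_sumsP=> I'' sI'' /= sumI''; exists I'' => //.
have dis : [disjoint I' & I''] by rewrite disjoint_sym (disjointWl sI'').
rewrite exchangeableE (eq_bigl [predU I' & I'']) => [|i]; last by rewrite inE.
by rewrite bigU //= -sumI'' addrN.
Qed.
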